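(* Let $M$ be a modular lattice of finite length with least element $0$ and greatest element $1$, and let $S(M)$ be its skeleton. Then (f) $S(M)=\{x\in M: x^{*+}=x\}$, and the maximal atomistic intervals of $M$ are exactly the intervals $[x,x^*]$ with $x\in S(M)$; (g) $S(M)$ is closed under the join $+$ of $M$, has least element $0$ and greatest element $1^+$, and with the order inherited from $M$ it is a lattice in which $x\vee y=x+y$ and $x\wedge y=(x\cdot y)^{*+}$.
   Context: $M$ is a modular lattice of finite length (every chain finite) with join $+$, meet $\cdot$. For $a\in M$: $a^*$ is the join of all elements covering $a$ if $a<1$, and $1^*=1$; $a^+$ is the meet of all elements covered by $a$ if $a>0$, and $0^+=0$; $a^{*+}$ means $(a^* )^+$. An interval $[a,b]$ is \emph{atomistic} if every element of it is a join of atoms of $[a,b]$ (elements covering $a$). The \emph{skeleton} $S(M)$ is the set of least elements of the maximal (under inclusion) atomistic intervals of $M$. *)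

From HB Require Import structures.
From mathcomp Require Import all_boot all_order.
From Stdlib Require Import ClassicalEpsilon.
Set Implicit Arguments. Unset Strict Implicit. Unset Printing Implicit Defensive.
Import Order.Theory.
Local Open Scope order_scope.

Section Defs.
Context {d : Order.disp_t} {M : tbLatticeType d}.

Definition modular : Prop :=
  forall x y z : M, x <= z -> x `|` (y `&` z) = (x `|` y) `&` z.

Definition is_chain (C : M -> Prop) : Prop :=
  forall x y, C x -> C y -> (x <= y) || (y <= x).
Definition finite_length : Prop :=
  forall C : M -> Prop, is_chain C -> exists s : seq M, forall x, C x -> x \in s.

Definition covers (a b : M) : Prop :=
  a < b /\ forall z, a <= z -> z <= b -> z = a \/ z = b.

Definition is_lub (S : M -> Prop) (u : M) : Prop :=
  (forall x, S x -> x <= u) /\ (forall v, (forall x, S x -> x <= v) -> u <= v).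
Definition is_glb (S : M -> Prop) (u : M) : Prop :=
  (forall x, S x -> u <= x) /\ (forall v, (forall x, S x -> v <= x) -> v <= u).

(* a^* : join of all elements covering a (1^* = 1); the join exists in a
   lattice of finite length, and is selected by choice *)
Definition ustar (a : M) : M :=
  if a == \top then \top
  else epsilon (inhabits (\bot : M)) (is_lub (fun b => covers a b)).

(* a^+ : meet of all elements covered by a (0^+ = 0) *)
Definition uplus (a : M) : M :=
  if a == \bot then \bot
  else epsilon (inhabits (\bot : M)) (is_glb (fun b => covers b a)).

(* the interval [a,b] is atomistic: every element of it is a join of atoms
   of [a,b] (the empty join being a) *)
Definition atom_of (a b x : M) : Prop := covers a x /\ x <= b.
Definition atomistic (a b : M) : Prop :=
  a <= b /\
  forall x, a <= x -> x <= b ->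
    exists s : seq M, (forall y, y \in s -> atom_of a b y) /\ x = foldr Order.join a s.

Definition max_atomistic (a b : M) : Prop :=
  atomistic a b /\
  forall c e, atomistic c e ->
    (forall z, a <= z -> z <= b -> c <= z /\ z <= e) ->
    (forall z, c <= z -> z <= e -> a <= z /\ z <= b).

Definition in_skeleton (x : M) : Prop := exists b, max_atomistic x b.

End Defs.

From mathcomp Require Import all_boot all_order.
From Stdlib Require Import Classical ClassicalEpsilon.
Unset Printing Implicit Defensive.
Import Order.Theory.
Local Open Scope order_scope.

(* Write a^* for [ustar a] and b^+ for [uplus b].  In a modular lattice of
   finite length a^* is a finite join of covers of a, which makes [a, a^*] a
   complemented interval; subintervals of complemented intervals are
   complemented, and complemented intervals are atomistic.  Hence [a, b] is
   atomistic iff a <= b <= a^*.  Since b^+ is b^* computed in the dual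
   lattice, the same argument read upside down gives, for c <= b,
   b <= c^*  <->  b^+ <= c.
   So x |-> x^*+ is a monotone, deflationary, idempotent operator; maximality
   forces an atomistic [a, b] to be [a, a^*] with a = a^*+, and the skeleton
   is the set of fixed points of x |-> x^*+, whence its lattice structure. *)

Section Lattice.
Context {d : Order.disp_t} {M : tbLatticeType d}.

Lemma foldr_join_le (a v : M) s :
  (foldr Order.join a s <= v) = (a <= v) && all (<= v) s.
Proof. by elim: s => [|p s IH] /=; rewrite ?andbT // leUx IH andbCA. Qed.

Lemma le_foldr_join (a : M) s : a <= foldr Order.join a s.
Proof. by have /andP[] := eqbLR (foldr_join_le a _ s) (lexx _). Qed.

Lemma mem_le_foldr_join (a p : M) s : p \in s -> p <= foldr Order.join a s.
Proof. by have /andP[_ /allP] := eqbLR (foldr_join_le a _ s) (lexx _); apply. Qed.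

Definition complemented_itv (a b : M) : Prop :=
  forall x, a <= x -> x <= b -> exists y, x `&` y = a /\ x `|` y = b.

Lemma interval_subset_iff {a b c e : M} : a <= b ->
  (forall z, a <= z -> z <= b -> c <= z /\ z <= e) <-> c <= a /\ b <= e.
Proof.
move=> ab; split=> [sub|[ca be] z az zb].
  by split; [case: (sub a) | case: (sub b)].
by split; [apply: le_trans az | apply: le_trans be].
Qed.

Lemma max_atomisticP (a b : M) : max_atomistic a b <-> atomistic a b /\
  forall c e, atomistic c e -> c <= a -> b <= e -> a <= c /\ e <= b.
Proof.
split=> -[[ab atomic] maxab]; split=> // c e [ce ce_atomic].
  move=> ca be; apply/(interval_subset_iff ce).
  exact: maxab (conj ce ce_atomic) (proj2 (interval_subset_iff ab) (conj ca be)).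
move=> /(interval_subset_iff ab)[ca be]; apply/(interval_subset_iff ce).
exact: maxab (conj ce ce_atomic) ca be.
Qed.

End Lattice.

Section Duality.
Context {d : Order.disp_t} {M : tbLatticeType d}.

Lemma finite_length_dual : @finite_length _ M -> @finite_length _ M^d.
Proof. by move=> Hfin C HC; apply: Hfin => x y Cx Cy; rewrite orbC; apply: HC. Qed.

Lemma modular_dual : @modular _ M -> @modular _ M^d.
Proof.
move=> Hmod; change (forall x y z : M, z <= x -> x `&` (y `|` z) = (x `&` y) `|` z).
by move=> x y z zx; rewrite meetC (joinC y) -Hmod // joinC meetC.
Qed.

Lemma covers_dual (a b : M) : @covers _ M^d a b <-> covers b a.
Proof.
by split=> -[ab H]; split=> // z h1 h2; case: (H z h2 h1); [right|left|right|left].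
Qed.

Lemma is_lub_covers_dual (b u : M) :
  @is_lub _ M^d (@covers _ M^d b) u <-> is_glb (covers^~ b) u.
Proof.
split=> -[ub least]; split=> [x /covers_dual/ub // | v ubv].
  by apply: least => x /covers_dual/ubv.
by apply: least => x /covers_dual/ubv.
Qed.

Lemma complemented_itv_dual (a b : M) :
  @complemented_itv _ M^d b a <-> complemented_itv a b.
Proof.
by split=> cab x ax xb; have [y [xy1 xy2]] := cab x xb ax; exists y.
Qed.

End Duality.

Section FiniteLength.
Context {d : Order.disp_t} {M : tbLatticeType d}.
Hypothesis Hfin : @finite_length d M.

Lemma no_strictly_increasing (x : nat -> M) : ~ (forall n, x n < x n.+1).
Proof.
move=> xS; have le_x : {mono x : i j / (i <= j)%N >-> i <= j}.
  exact/le_mono/(homo_ltn lt_trans xS).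
have [s Hs] : exists s : seq M, forall z, (exists n, z = x n) -> z \in s.
  by apply: Hfin => _ _ [i ->] [j ->]; rewrite !le_x leq_total.
have x_uniq : uniq (map x (iota 0 (size s).+1)).
  by rewrite (map_inj_uniq (inc_inj le_x)) iota_uniq.
have /(uniq_leq_size x_uniq) : {subset map x (iota 0 (size s).+1) <= s}.
  by move=> _ /mapP[n _ ->]; apply: Hs; exists n.
by rewrite size_map size_iota ltnn.
Qed.

Lemma exists_maximal {P : M -> Prop} {x0 : M} : P x0 ->
  exists m, P m /\ forall y, P y -> m <= y -> y = m.
Proof.
move=> Px0; apply: NNPP => nomax.
have up m : P m -> exists y, P y /\ m < y.
  move=> Pm; apply: NNPP => nobig; apply: nomax; exists m; split=> // y Py my.
  apply: NNPP => ne; apply: nobig; exists y; split=> //.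
  by rewrite lt_def my andbT; apply/eqP.
pose next m := epsilon (inhabits m) (fun y => P y /\ m < y).
have nextP m : P m -> P (next m) /\ m < next m.
  by move=> Pm; apply: (epsilon_spec _ _ (up m Pm)).
have Piter n : P (iter n next x0) by elim: n => //= n /nextP[].
apply: (@no_strictly_increasing (fun n => iter n next x0)) => n.
by case: (nextP _ (Piter n)).
Qed.

End FiniteLength.

Section Covers.
Context {d : Order.disp_t} {M : tbLatticeType d}.
Hypothesis Hmod : @modular d M.
Hypothesis Hfin : @finite_length d M.

Lemma exists_covers {a b : M} : a < b -> exists2 c, covers a c & c <= b.
Proof.
move=> ab; have [c [[ac cb] cmin]] := exists_maximal (finite_length_dual Hfin)
  (P := fun z : M => a < z /\ z <= b) (conj ab (lexx b)).
exists c => //; split=> // z az zc; have [->|za] := eqVneq z a; first by left.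
by right; apply: cmin => //; split; [rewrite lt_def za az | apply: le_trans cb].
Qed.

Lemma covers_meet {a p x : M} : covers a p -> a <= x -> p `&` x = a \/ p <= x.
Proof.
move=> [ap Hp] ax; have [||->|/meet_idPl] := Hp (p `&` x).
- by rewrite lexI (ltW ap) ax.
- exact: leIl.
- by left.
- by right.
Qed.

(* By modularity [b, b `|` p] is isomorphic to [p `&` b, p] = [a, p]. *)
Lemma covers_join {a p b : M} : covers a p -> a <= b -> ~~ (p <= b) ->
  covers b (b `|` p).
Proof.
move=> cap ab /negP pb; split.
  by rewrite lt_leAnge leUl leUx lexx /=; apply/negP.
move=> w bw wbp; have bpw : b `|` (p `&` w) = w by rewrite Hmod //; apply/meet_idPr.
have [pwa|/meet_idPl pw] := covers_meet cap (le_trans ab bw).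
  by left; rewrite -bpw pwa; apply/join_idPl.
by right; rewrite -bpw pw.
Qed.

End Covers.

Section Ustar.
Context {d : Order.disp_t} {M : tbLatticeType d}.
Hypothesis Hfin : @finite_length d M.

Lemma is_lub_unique {S : M -> Prop} {u v : M} : is_lub S u -> is_lub S v -> u = v.
Proof. by move=> [Su lu] [Sv lv]; apply: le_anti; rewrite lu ?lv. Qed.

Lemma covers_ub_ge {a v : M} : a != \top ->
  (forall p, covers a p -> p <= v) -> a <= v.
Proof.
move=> na ubv; have [c ac _] : exists2 c, covers a c & c <= \top.
  by apply: exists_covers; rewrite // lt_neqAle na lex1.
exact: le_trans (ltW ac.1) (ubv c ac).
Qed.

Lemma exists_foldr_covers_ub (a : M) (Q : M -> Prop) : exists s,
  (forall p, p \in s -> covers a p /\ Q p) /\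
  forall p, covers a p -> Q p -> p <= foldr Order.join a s.
Proof.
pose join_of_covers u :=
  exists s, (forall p, p \in s -> covers a p /\ Q p) /\ u = foldr Order.join a s.
have seed : join_of_covers a by exists [::].
have [_ [[s [sP ->]] smax]] := exists_maximal Hfin seed.
exists s; split=> // p cp Qp.
rewrite -(smax (p `|` foldr Order.join a s)) ?leUl ?leUr //.
by exists (p :: s); split=> // q; rewrite in_cons => /predU1P[->|/sP].
Qed.

Lemma ustar_spec (a : M) : exists s, [/\ forall p, p \in s -> covers a p,
  forall p, covers a p -> p <= ustar a & ustar a = foldr Order.join a s].
Proof.
rewrite /ustar; have [->|na] := eqVneq a \top.
  by exists [::]; split=> // p _; rewrite lex1.
have [s [sP ub]] := exists_foldr_covers_ub a (fun=> True).
exists s; have {}sP p : p \in s -> covers a p by case/sP.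
have lub : is_lub (covers a) (foldr Order.join a s).
  split=> [p cp|v ubv]; first exact: ub.
  rewrite foldr_join_le covers_ub_ge //=.
  by apply/allP => p /sP; apply: ubv.
have -> : epsilon (inhabits \bot) (is_lub (covers a)) = foldr Order.join a s.
  exact: is_lub_unique (epsilon_spec (inhabits \bot) _ (ex_intro _ _ lub)) lub.
by split=> //; case: lub.
Qed.

Lemma le_ustar (a : M) : a <= ustar a.
Proof. by have [s [_ _ ->]] := ustar_spec a; apply: le_foldr_join. Qed.

Lemma covers_le_ustar {a p : M} : covers a p -> p <= ustar a.
Proof. by have [s [_ + _]] := ustar_spec a; apply. Qed.

Lemma ustar_le {a v : M} :
  a <= v -> (forall p, covers a p -> p <= v) -> ustar a <= v.
Proof.
have [s [sP _ ->] av ubv] := ustar_spec a.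
by rewrite foldr_join_le av; apply/allP => p /sP; apply: ubv.
Qed.

Lemma is_lub_covers_ustar {a : M} : a != \top -> is_lub (covers a) (ustar a).
Proof.
move=> na; split=> [p|v ubv]; first exact: covers_le_ustar.
exact: ustar_le (covers_ub_ge na ubv) ubv.
Qed.

End Ustar.

Lemma uplus_dual {d} {M : tbLatticeType d} (Hfin : @finite_length d M) (b : M) :
  uplus b = @ustar _ M^d b.
Proof.
rewrite /uplus; have [->|nb] := eqVneq b \bot; first by rewrite /ustar eqxx.
have lub := is_lub_covers_ustar (finite_length_dual Hfin) nb.
apply: (is_lub_unique (M := M^d) _ lub); apply/is_lub_covers_dual.
apply: (epsilon_spec (inhabits \bot)).
by exists (@ustar _ M^d b); apply/is_lub_covers_dual.
Qed.

Lemma ustar_dual {d} {M : tbLatticeType d} (Hfin : @finite_length d M) (a : M) :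
  ustar a = @uplus _ M^d a.
Proof.
(* [M^d^d] is [M] up to conversion, which [exact] (unlike [exact:]) sees through. *)
symmetry; exact (@uplus_dual _ M^d (finite_length_dual Hfin) a).
Qed.

Section Modular.
Context {d : Order.disp_t} {M : tbLatticeType d}.
Hypothesis Hmod : @modular d M.
Hypothesis Hfin : @finite_length d M.

Lemma ustar_mono {a b : M} : a <= b -> ustar a <= ustar b.
Proof.
move=> ab; apply: (ustar_le Hfin) => [|p cap].
  exact: le_trans ab (le_ustar Hfin b).
have [pb|npb] := boolP (p <= b); first exact: le_trans pb (le_ustar Hfin b).
exact: le_trans (leUr p b) (covers_le_ustar Hfin (covers_join Hmod cap ab npb)).
Qed.

Lemma complemented_itv_sub {a b a' b' : M} : complemented_itv a b ->
  a <= a' -> a' <= b' -> b' <= b -> complemented_itv a' b'.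
Proof.
move=> cab aa' a'b' b'b x a'x xb'.
have [y [xy_meet xy_join]] := cab x (le_trans aa' a'x) (le_trans xb' b'b).
exists ((y `|` a') `&` b'); split.
  rewrite meetA meetAC (meet_l xb') joinC meetC -Hmod //.
  by rewrite meetC xy_meet (join_l aa').
by rewrite Hmod // joinA xy_join (join_l (le_trans a'b' b'b)) (meet_r b'b).
Qed.

Lemma complemented_foldr_covers {a : M} {s} : (forall p, p \in s -> covers a p) ->
  complemented_itv a (foldr Order.join a s).
Proof.
(* Take z maximal with x `&` z = a: an atom p in s outside x `|` z would make
   z `|` p a larger such element. *)
move=> sP x ax xb; set b := foldr Order.join a s in xb *.
pose P z := [/\ a <= z, z <= b & x `&` z = a].
have seed : P a by split; rewrite ?le_foldr_join ?(meet_r ax).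
have [z [[az zb xz] zmax]] := exists_maximal Hfin seed.
exists z; split=> //; apply: le_anti; rewrite leUx xb zb foldr_join_le.
rewrite (le_trans ax (leUl x z)) /=; apply/allP => p ps /=; apply/negPn/negP => pxz.
have [pxz_a|] := covers_meet (sP p ps) (le_trans ax (leUl x z)); last by apply/negP.
have xzp : (x `|` z) `&` (z `|` p) = z.
  by rewrite meetC -Hmod ?leUr // pxz_a; apply/join_idPl.
have Pzp : P (z `|` p).
  split; [exact: le_trans az (leUl z p)|by rewrite leUx zb mem_le_foldr_join|].
  by rewrite -(joinKI z x) -meetA xzp.
have zpz := zmax _ Pzp (leUl z p).
by move/negP: pxz; apply; rewrite (le_trans (leUr p z)) // zpz leUr.
Qed.

Lemma complemented_itv_ustar (a : M) : complemented_itv a (ustar a).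
Proof.
by have [s [sP _ ->]] := ustar_spec Hfin a; apply: complemented_foldr_covers.
Qed.

Lemma complemented_itv_atomistic {a b : M} :
  a <= b -> complemented_itv a b -> atomistic a b.
Proof.
(* The join u of the atoms below x is x: otherwise a complement of u in [a, x]
   would lie above an atom that is not below u. *)
move=> ab cab; split=> // x ax xb.
have [s [sP ub]] := exists_foldr_covers_ub Hfin a (fun p => p <= x).
set u := foldr Order.join a s in ub.
have ux : u <= x by rewrite foldr_join_le ax; apply/allP => p /sP[].
exists s; split=> [p /sP[cp px]|]; first by split; last exact: le_trans px xb.
apply: le_anti; rewrite ux andbT; apply/negPn/negP => nxu.
have [v [uv_meet uv_join]] :=
  complemented_itv_sub cab (lexx a) ax xb u (le_foldr_join a s) ux.
have av : a < v.
  rewrite lt_def -{2}uv_meet leIr andbT; apply: contra nxu => /eqP va.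
  by rewrite -uv_join va leUx lexx le_foldr_join.
have [q cq qv] := exists_covers Hfin av.
have qu : q <= u by apply: ub cq (le_trans qv _); rewrite -uv_join leUr.
have qa : q <= a by rewrite -uv_meet lexI qu qv.
by have := lt_le_trans cq.1 qa; rewrite ltxx.
Qed.

Lemma atomisticE {a b : M} : atomistic a b <-> a <= b /\ b <= ustar a.
Proof.
split=> [[ab atomic]|[ab bs]].
  split=> //; have [s [sP ->]] := atomic b ab (lexx b).
  rewrite foldr_join_le le_ustar //=; apply/allP => p /sP[cp _].
  exact: covers_le_ustar.
apply: (complemented_itv_atomistic ab).
exact: complemented_itv_sub (complemented_itv_ustar a) (lexx a) ab bs.
Qed.

End Modular.

Lemma uplus_le_of_le_ustar {d} {M : tbLatticeType d} (Hmod : @modular d M)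
    (Hfin : @finite_length d M) {c b : M} :
  c <= b -> b <= ustar c -> uplus b <= c.
Proof.
move=> cb bc; rewrite (uplus_dual Hfin).
have /complemented_itv_dual cbd :=
  complemented_itv_sub Hmod (complemented_itv_ustar Hmod Hfin c) (lexx c) cb bc.
have Hmod_d := modular_dual Hmod; have Hfin_d := finite_length_dual Hfin.
by case/(atomisticE Hmod_d Hfin_d): (complemented_itv_atomistic Hmod_d Hfin_d cb cbd).
Qed.

Section Skeleton.
Context {d : Order.disp_t} {M : tbLatticeType d}.
Hypothesis Hmod : @modular d M.
Hypothesis Hfin : @finite_length d M.
Let Hmod_d := modular_dual Hmod.
Let Hfin_d := finite_length_dual Hfin.

Lemma le_ustarE {c b : M} : c <= b -> (b <= ustar c) = (uplus b <= c).
Proof.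
move=> cb; apply/idP/idP => [|bc]; first exact: uplus_le_of_le_ustar.
rewrite (ustar_dual Hfin); apply: (uplus_le_of_le_ustar Hmod_d Hfin_d) => //.
by rewrite -(uplus_dual Hfin).
Qed.

Lemma uplus_le (b : M) : uplus b <= b.
Proof. by rewrite (uplus_dual Hfin); apply: (le_ustar Hfin_d). Qed.

Lemma uplus_mono {a b : M} : a <= b -> uplus a <= uplus b.
Proof. by rewrite !(uplus_dual Hfin); apply: (ustar_mono Hmod_d Hfin_d). Qed.

Lemma ustar_top : ustar (\top : M) = \top.
Proof. by rewrite /ustar eqxx. Qed.

Lemma uplus_ustar_le (x : M) : uplus (ustar x) <= x.
Proof. by rewrite -le_ustarE ?le_ustar. Qed.

Lemma ustar_uplus_ustar (x : M) : ustar (uplus (ustar x)) = ustar x.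
Proof.
apply: le_anti; rewrite (ustar_mono Hmod Hfin (uplus_ustar_le x)).
by rewrite le_ustarE ?uplus_le ?lexx.
Qed.

Lemma uplus_ustar_mono {x y : M} : x <= y -> uplus (ustar x) <= uplus (ustar y).
Proof. by move=> xy; apply/uplus_mono/(ustar_mono Hmod Hfin). Qed.

Lemma max_atomisticE (a b : M) :
  max_atomistic a b <-> b = ustar a /\ uplus (ustar a) = a.
Proof.
have atomistic_ustar (c e : M) : c <= e -> e <= ustar c -> atomistic c e.
  by move=> ce ec; apply/(atomisticE Hmod Hfin).
rewrite max_atomisticP; split=> [[/(atomisticE Hmod Hfin)[ab bs] maxab]|[-> a_fix]].
  have := maxab _ _ (atomistic_ustar _ _ (le_ustar Hfin a) (lexx _)) (lexx a) bs.
  case=> _ sb.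
  have eb : b = ustar a by apply: le_anti; rewrite bs sb.
  split=> //; apply: le_anti; rewrite uplus_ustar_le /=.
  have atomistic_fix : atomistic (uplus (ustar a)) (ustar a).
    by apply: atomistic_ustar; rewrite ?uplus_le ?ustar_uplus_ustar.
  by case: (maxab _ _ atomistic_fix (uplus_ustar_le a)); rewrite ?eb.
split; first exact: atomistic_ustar _ _ (le_ustar Hfin a) (lexx _).
move=> c e /(atomisticE Hmod Hfin)[ce ec] ca ae.
have ac : a <= c.
  rewrite -{1}a_fix -le_ustarE ?(le_trans ca (le_ustar Hfin a)) //.
  exact: le_trans ae ec.
have ca_eq : c = a by apply: le_anti; rewrite ca ac.
by split; rewrite -?ca_eq.
Qed.

Lemma in_skeletonE (x : M) : in_skeleton x <-> uplus (ustar x) = x.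
Proof.
split=> [[b /max_atomisticE[]] //|x_fix].
by exists (ustar x); apply/max_atomisticE.
Qed.

Lemma in_skeleton_uplus_ustar (x : M) : in_skeleton (uplus (ustar x)).
Proof. by apply/in_skeletonE; rewrite ustar_uplus_ustar. Qed.

Lemma skeleton_le_uplus_ustar {x y : M} :
  in_skeleton x -> x <= y -> x <= uplus (ustar y).
Proof. by move=> /in_skeletonE x_fix xy; rewrite -x_fix uplus_ustar_mono. Qed.

End Skeleton.

Theorem theorem6p2 (d : Order.disp_t) (M : tbLatticeType d)
  (Hmod : @modular d M) (Hfin : @finite_length d M) :
  (* (f) *)
  (forall x : M, in_skeleton x <-> uplus (ustar x) = x) /\
  (forall a b : M, max_atomistic a b <-> (in_skeleton a /\ b = ustar a)) /\
  (* (g) *)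
  (forall x y : M, in_skeleton x -> in_skeleton y -> in_skeleton (x `|` y)) /\
  (in_skeleton (\bot : M) /\ forall x : M, in_skeleton x -> \bot <= x) /\
  (in_skeleton (uplus (\top : M)) /\ forall x : M, in_skeleton x -> x <= uplus \top) /\
  (forall x y : M, in_skeleton x -> in_skeleton y ->
     x <= x `|` y /\ y <= x `|` y /\
     (forall z, in_skeleton z -> x <= z -> y <= z -> x `|` y <= z)) /\
  (forall x y : M, in_skeleton x -> in_skeleton y ->
     in_skeleton (uplus (ustar (x `&` y))) /\
     uplus (ustar (x `&` y)) <= x /\ uplus (ustar (x `&` y)) <= y /\
     (forall z, in_skeleton z -> z <= x -> z <= y -> z <= uplus (ustar (x `&` y)))).
Proof.
have skelE := in_skeletonE Hmod Hfin.
have below := skeleton_le_uplus_ustar Hmod Hfin.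
have deflate := uplus_ustar_le Hmod Hfin.
split=> //; split=> [a b|].
  split=> [/(max_atomisticE Hmod Hfin)[-> /skelE] | [/skelE ? ->]] //.
  exact/(max_atomisticE Hmod Hfin).
split=> [x y sx sy|].
  by apply/skelE/le_anti; rewrite deflate leUx !below ?leUl ?leUr.
split; first by split=> [|x _]; [apply/skelE/le_anti; rewrite deflate | ]; rewrite le0x.
split; first rewrite -ustar_top.
  by split=> [|x sx]; [apply: in_skeleton_uplus_ustar | apply: below (lex1 x)].
split=> [x y _ _|x y _ _].
  by split; [|split=> [|z _ xz yz]]; rewrite ?leUl ?leUr ?leUx ?xz ?yz.
split; first exact: in_skeleton_uplus_ustar.
rewrite !(le_trans (deflate _)) ?leIl ?leIr //; do 2!split=> //.
by move=> z sz zx zy; apply: below sz _; rewrite lexI zx zy.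
Qed.
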